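(* For $n\ge0$ let $A_n=\sum_{r=0}^n n!/r!$. A prime $p$ satisfies $0!-1!+2!-3!+\cdots+(-1)^{p-1}(p-1)!\equiv 0\pmod p$ if and only if $p$ divides $A_{p-1}$. *)

From mathcomp Require Import all_boot all_order all_algebra.
Set Implicit Arguments. Unset Strict Implicit. Unset Printing Implicit Defensive.
Import GRing.Theory Num.Theory.

(* A_n = sum_{r=0}^n n!/r!  (each quotient is exact since r <= n) *)
Definition A (n : nat) : nat := \sum_(0 <= r < n.+1) n`! %/ r`!.

Definition altfact (m : nat) : int :=
  (\sum_(0 <= k < m) (-1) ^+ k * (k`!)%:Z)%R.

(* Modulo p the terms of A_(p-1), read backwards, are the falling factorials
   (p-1)(p-2)...(p-k), and p - j = -j modulo p turns each of them into
   (-1)^k k!; hence A_(p-1) and the alternating factorial sum agree modulo p. *)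

From mathcomp Require Import all_boot all_order all_algebra.
From mathcomp Require Import ring.
Import GRing.Theory.

Local Open Scope ring_scope.

Lemma A_ffact (n : nat) : A n = (\sum_(0 <= k < n.+1) n ^_ k)%N.
Proof.
rewrite /A big_nat_rev /=; apply: eq_big_nat => k /andP [_ lt_kn].
by rewrite add0n subSS -ffact_factd // -ltnS.
Qed.

Section FallingFactorialNegOne.

Variables (R : comPzRingType) (n : nat).
Hypothesis natrS0 : (n.+1)%:R = 0 :> R.

Lemma natr_ffact_neg1 (k : nat) :
  (k <= n)%N -> (n ^_ k)%:R = (-1) ^+ k * (k`!)%:R :> R.
Proof.
elim: k => [|k IHk] le_kn; first by rewrite ffactn0 expr0 mul1r.
have le_k1n := ltnW le_kn.
have n_sub_k : (n - k)%:R = - (k.+1)%:R :> R.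
  by apply/eqP; rewrite -subr_eq0 opprK -natrD addnS subnK // natrS0.
rewrite ffactnSr natrM IHk // n_sub_k factS natrM exprS.
ring.
Qed.

Lemma natr_A_neg1 :
  (A n)%:R = \sum_(0 <= k < n.+1) (-1) ^+ k * (k`!)%:R :> R.
Proof.
rewrite A_ffact natr_sum; apply: eq_big_nat => k /andP [_ lt_kn].
by rewrite natr_ffact_neg1.
Qed.

End FallingFactorialNegOne.

Lemma intr_altfact (R : pzRingType) (m : nat) :
  (altfact m)%:~R = \sum_(0 <= k < m) (-1) ^+ k * (k`!)%:R :> R.
Proof.
rewrite /altfact rmorph_sum; apply: eq_bigr => k _.
by rewrite rmorphM rmorphXn rmorphN1.
Qed.

Theorem lemma5p2 (p : nat) (hp : prime p) :
  ((p%:Z %| altfact p)%Z <-> (p %| A p.-1)%N).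
Proof.
have charFp := pchar_Fp hp.
have p_eq : p = p.-1.+1 by rewrite prednK ?prime_gt0.
have natrS0 : (p.-1.+1)%:R = 0 :> 'F_p by rewrite -p_eq pchar_Fp_0.
rewrite (dvdz_pcharf charFp) (dvdn_pcharf charFp) intr_altfact.
by rewrite natr_A_neg1 // -p_eq.
Qed.
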